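(* Let two vehicles $i$ and $j$ move in the plane according to dynamics $(\dot{\boldsymbol\xi},\dot{\boldsymbol\zeta})^{\mathsf T}=F(t,\boldsymbol\xi,\boldsymbol\zeta)$ with bounded velocity and acceleration, as described in the context. Fix a time $t_\circ$ and assume that, for $t\ge t_\circ$, the trajectory $t\mapsto \mathbf p_k(t)$ of each vehicle $k\in\{i,j\}$ is given either by the straight-line model or by the circular model described in the context. Let $d_{ij}(t)=\|\mathbf p_i(t)-\mathbf p_j(t)\|_2$, let $\phi>0$, and let $$\mathcal T_S=\inf\{t\ge t_\circ:\ d_{ij}(t)-\phi\le 0\}.$$ If $\mathcal T_S<\infty$, then there exists $\check t$ with $t_\circ\le \check t<\mathcal T_S$ such that $t\mapsto d_{ij}(t)-\phi$ is strictly decreasing on $[\check t,\mathcal T_S)$.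
   Context: Each vehicle has position $\boldsymbol\xi(t)\in\mathbb R^2$ and velocity $\boldsymbol\zeta(t)\in\mathbb R^2$ obeying $(\dot{\boldsymbol\xi},\dot{\boldsymbol\zeta})^{\mathsf T}=F(t,\boldsymbol\xi,\boldsymbol\zeta)$ with $F:\mathbb R_+\times\mathbb R^2\times\mathbb R^2\to\mathbb R^4$ smooth enough that the solution exists uniquely up to the collision time $\mathcal T$, and with $\boldsymbol\zeta\in C^1([0,\mathcal T);B(0,v_{\max}))$, $\dot{\boldsymbol\zeta}\in C([0,\mathcal T);B(0,a_{\max}))$ (bounded velocity and acceleration; $B(x,r)$ is the open Euclidean ball). Vehicles are modeled as disks of common diameter $\phi$, so a collision means $d_{ij}\le\phi$. At time $t_\circ$ set $(\mathbf p_\circ,\mathbf v_\circ,\mathbf a_\circ)=(\boldsymbol\xi(t_\circ),\boldsymbol\zeta(t_\circ),\dot{\boldsymbol\zeta}(t_\circ))$ for each vehicle, $\mathbf v_*=\mathbf v_\circ/\|\mathbf v_\circ\|_2=(v_{*x},v_{*y})$, $\mathbf v_\perp=(-v_{*y},v_{*x})$, longitudinal acceleration $a_f=\mathbf a_\circ\cdot\mathbf v_*$ and lateral acceleration $a_s=\mathbf a_\circ\cdot\mathbf v_\perp$. Straight-line model (used when $a_s$ is zero or negligible): $\mathbf p(t)=\mathbf p_\circ+\mathbf v_\circ(t-t_\circ)+\tfrac12\mathbf a_\circ(t-t_\circ)^2$, $\mathbf v(t)=\mathbf v_\circ+\mathbf a_\circ(t-t_\circ)$, $\mathbf a(t)\equiv\mathbf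 a_\circ$. Circular model (used when $a_s\neq0$): $r=\|\mathbf v_\circ\|_2^2/|a_s|$, $\omega_0=a_s/\|\mathbf v_\circ\|_2$, center $\mathbf c=\mathbf p_\circ+r\,\mathrm{sgn}(a_s)\mathbf v_\perp$, initial phase $\alpha_0=\mathrm{sgn}(p_{\circ,y}-c_y)\arccos\big((p_{\circ,x}-c_x)/r\big)$, where $\mathrm{sgn}(z)=1$ if $z\ge0$ and $-1$ otherwise; $\omega(t)=\min\{0,\omega_0+\tfrac{a_f}{2r}(t-t_\circ)\}$ if $\omega_0<0$ and $\omega(t)=\max\{0,\omega_0+\tfrac{a_f}{2r}(t-t_\circ)\}$ if $\omega_0>0$; and $\mathbf p(t)=\mathbf c+r\big(\cos(\alpha_0+\omega(t)(t-t_\circ)),\ \sin(\alpha_0+\omega(t)(t-t_\circ))\big)$ for $t\ge t_\circ$. *)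

From Stdlib Require Import Reals Lra.
Open Scope R_scope.

Definition vec : Type := (R * R)%type.

Definition vadd (u w : vec) : vec := (fst u + fst w, snd u + snd w).
Definition vsub (u w : vec) : vec := (fst u - fst w, snd u - snd w).
Definition vscale (k : R) (u : vec) : vec := (k * fst u, k * snd u).
Definition vdot (u w : vec) : R := fst u * fst w + snd u * snd w.
Definition vnorm (u : vec) : R := sqrt (fst u ^ 2 + snd u ^ 2).

Definition sgn (z : R) : R := if Rle_dec 0 z then 1 else -1.

Definition vstar (v0 : vec) : vec := vscale (/ vnorm v0) v0.
Definition vperp (v0 : vec) : vec := (- snd (vstar v0), fst (vstar v0)).
Definition a_f (v0 a0 : vec) : R := vdot a0 (vstar v0).
Definition a_s (v0 a0 : vec) : R := vdot a0 (vperp v0).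

Definition straight_pos (t0 : R) (p0 v0 a0 : vec) (t : R) : vec :=
  vadd p0 (vadd (vscale (t - t0) v0) (vscale (/ 2 * (t - t0) ^ 2) a0)).

Definition circ_r (v0 a0 : vec) : R := vnorm v0 ^ 2 / Rabs (a_s v0 a0).
Definition circ_omega0 (v0 a0 : vec) : R := a_s v0 a0 / vnorm v0.
Definition circ_center (p0 v0 a0 : vec) : vec :=
  vadd p0 (vscale (circ_r v0 a0 * sgn (a_s v0 a0)) (vperp v0)).
Definition circ_alpha0 (p0 v0 a0 : vec) : R :=
  let c := circ_center p0 v0 a0 in
  sgn (snd p0 - snd c) * acos ((fst p0 - fst c) / circ_r v0 a0).
Definition circ_omega (t0 : R) (v0 a0 : vec) (t : R) : R :=
  let w := circ_omega0 v0 a0 + a_f v0 a0 / (2 * circ_r v0 a0) * (t - t0) in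
  if Rlt_dec (circ_omega0 v0 a0) 0 then Rmin 0 w else Rmax 0 w.
Definition circ_pos (t0 : R) (p0 v0 a0 : vec) (t : R) : vec :=
  let th := circ_alpha0 p0 v0 a0 + circ_omega t0 v0 a0 t * (t - t0) in
  vadd (circ_center p0 v0 a0) (vscale (circ_r v0 a0) (cos th, sin th)).

Inductive model : Type := Straight | Circular.

Definition model_ok (m : model) (v0 a0 : vec) : Prop :=
  match m with Straight => True | Circular => a_s v0 a0 <> 0 end.

Definition model_pos (m : model) (t0 : R) (p0 v0 a0 : vec) (t : R) : vec :=
  match m with
  | Straight => straight_pos t0 p0 v0 a0 t
  | Circular => circ_pos t0 p0 v0 a0 t
  end.

Definition is_glb (S : R -> Prop) (m : R) : Prop :=
  (forall x, S x -> m <= x) /\ (forall b, (forall x, S x -> b <= x) -> b <= m).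

(* Near any instant T, each predicted trajectory agrees on a one-sided
   neighbourhood of T with a pair of entire functions of t - T: the straight-line
   model is quadratic in t, and in the circular model the clamped angular velocity
   (a min or max of 0 and an affine function) is affine on each side of T, so the
   phase is quadratic. Hence the squared distance D = d^2 agrees just left of T_S
   with an entire function g of t - T_S, while D(T_S) <= phi^2 < D(t) for
   t0 <= t < T_S, the first inequality by continuity from the right. So g is not
   constant, g'(h) = h^k c(h) with c(0) <> 0 has a constant sign on some (-e, 0),
   and that sign is negative because g(-e/2) > g(0): D, hence d, is strictly
   decreasing just before T_S. *)

From Stdlib Require Import Reals Lra Lia Classical.
From Coquelicot Require Import Coquelicot.
Open Scope R_scope.

Definition entire (f : R -> R) : Prop :=
  exists a, CV_radius a = p_infty /\ forall x, f x = PSeries a x.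

Lemma is_lim_seq_bounded (u : nat -> R) (l : R) :
  is_lim_seq u l -> exists M, forall n, Rabs (u n) <= M.
Proof.
  intros Hu. apply is_lim_seq_Reals, cv_cvabs in Hu.
  destruct (cauchy_bound _ (CV_Cauchy _ (exist _ _ Hu))) as [M HM].
  exists M. intros n. apply HM. exists n. reflexivity.
Qed.

Lemma CV_radius_infinite (a : nat -> R) :
  (forall x, ex_pseries a x) -> CV_radius a = p_infty.
Proof.
  intros Ha.
  assert (Hle : forall r : R, Rbar_le r (CV_radius a)).
  { intros r. apply (proj1 (CV_radius_bounded a)).
    apply (is_lim_seq_bounded _ 0), ex_series_lim_0, ex_pseries_R, Ha. }
  destruct (CV_radius a) as [r| |]; try reflexivity.
  - specialize (Hle (r + 1)). simpl in Hle. lra.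
  - destruct (Hle 0).
Qed.

Lemma CV_radius_infinite_inside (a : nat -> R) (x : R) :
  CV_radius a = p_infty -> Rbar_lt (Rabs x) (CV_radius a).
Proof. intros ->. exact I. Qed.

Lemma CV_radius_decr_n (a : nat -> R) (n : nat) :
  CV_radius (PS_decr_n a n) = CV_radius a.
Proof.
  induction n as [|n IHn].
  - apply CV_radius_ext. intros k. reflexivity.
  - rewrite <- IHn, <- (CV_radius_decr_1 (PS_decr_n a n)).
    apply CV_radius_ext. intros k. unfold PS_decr_n, PS_decr_1. f_equal. lia.
Qed.

Lemma entire_ext (f g : R -> R) : entire f -> (forall x, f x = g x) -> entire g.
Proof.
  intros [a [Ha Hf]] Hfg. exists a. split; [exact Ha|].
  intros x. rewrite <- Hfg. apply Hf.
Qed.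

Lemma entire_of_is_pseries (f : R -> R) (a : nat -> R) :
  (forall x, is_pseries a x (f x)) -> entire f.
Proof.
  intros Ha. exists a. split.
  - apply CV_radius_infinite. intros x. eexists. apply Ha.
  - intros x. symmetry. apply is_pseries_unique, Ha.
Qed.

Lemma entire_is_pseries (f : R -> R) :
  entire f -> exists a, forall x, Rbar_lt (Rabs x) (CV_radius a) /\ is_pseries a x (f x).
Proof.
  intros [a [Ha Hf]]. exists a. intros x.
  assert (Hx := CV_radius_infinite_inside a x Ha). split; [exact Hx|].
  rewrite Hf. apply PSeries_correct, CV_radius_inside, Hx.
Qed.

Lemma entire_plus (f g : R -> R) : entire f -> entire g -> entire (fun x => f x + g x).
Proof.
  intros Hf Hg.
  destruct (entire_is_pseries f Hf) as [a Ha], (entire_is_pseries g Hg) as [b Hb].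
  apply (entire_of_is_pseries _ (PS_plus a b)). intros x.
  apply (is_pseries_plus a b); [apply Ha|apply Hb].
Qed.

Lemma entire_mult (f g : R -> R) : entire f -> entire g -> entire (fun x => f x * g x).
Proof.
  intros Hf Hg.
  destruct (entire_is_pseries f Hf) as [a Ha], (entire_is_pseries g Hg) as [b Hb].
  apply (entire_of_is_pseries _ (PS_mult a b)). intros x.
  apply is_pseries_mult; try apply Ha; apply Hb.
Qed.

Lemma entire_scal (c : R) (f : R -> R) : entire f -> entire (fun x => c * f x).
Proof.
  intros Hf. destruct (entire_is_pseries f Hf) as [a Ha].
  apply (entire_of_is_pseries _ (PS_scal c a)). intros x.
  apply (is_pseries_scal c a); [apply Rmult_comm|apply Ha].
Qed.

Lemma entire_minus (f g : R -> R) : entire f -> entire g -> entire (fun x => f x - g x).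
Proof.
  intros Hf Hg. apply (entire_ext (fun x => f x + -1 * g x)).
  - apply entire_plus, entire_scal; assumption.
  - intros x. ring.
Qed.

Lemma entire_comp_scal (k : R) (f : R -> R) : entire f -> entire (fun x => f (k * x)).
Proof.
  intros Hf. destruct (entire_is_pseries f Hf) as [a Ha].
  apply (entire_of_is_pseries _ (fun n => k ^ n * a n)). intros x.
  assert (H := proj2 (Ha (k * x))). apply is_pseries_R in H. apply is_pseries_R.
  eapply is_series_ext; [|exact H]. intros n. simpl. rewrite Rpow_mult_distr. ring.
Qed.

Lemma is_pseries_const_0 (x : R) : is_pseries (fun _ : nat => 0) x 0.
Proof.
  assert (H : Rbar_lt (Rabs x) (CV_radius (fun _ : nat => 0)))
    by (rewrite CV_radius_const_0; exact I).
  apply CV_radius_inside, PSeries_correct in H. rewrite PSeries_const_0 in H. exact H.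
Qed.

Definition PS_const (c : R) (n : nat) : R := match n with O => c | S _ => 0 end.

Lemma is_pseries_PS_const (c x : R) : is_pseries (PS_const c) x c.
Proof.
  apply is_pseries_R. change (is_lim_seq (sum_n (fun n => PS_const c n * x ^ n)) c).
  apply (is_lim_seq_ext (fun _ => c)); [|apply is_lim_seq_const].
  intros N. induction N as [|N IHN].
  - rewrite sum_O. simpl. ring.
  - rewrite sum_Sn, <- IHN. unfold plus. simpl. ring.
Qed.

Lemma entire_const (c : R) : entire (fun _ => c).
Proof. apply (entire_of_is_pseries _ (PS_const c)), is_pseries_PS_const. Qed.

Lemma entire_id : entire (fun x => x).
Proof.
  apply (entire_of_is_pseries _ (PS_incr_1 (PS_const 1))). intros x.
  assert (H := is_pseries_incr_1 (PS_const 1) x 1 (is_pseries_PS_const 1 x)).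
  simpl in H. rewrite Rmult_1_r in H. exact H.
Qed.

Definition PS_even (b : nat -> R) (n : nat) : R :=
  if Nat.even n then b (Nat.div2 n) else 0.
Definition PS_odd (b : nat -> R) (n : nat) : R :=
  if Nat.even n then 0 else b (Nat.div2 n).

Lemma even_div2_double (n : nat) : Nat.even (2 * n) = true /\ Nat.div2 (2 * n) = n.
Proof. split; [rewrite Nat.even_mul; reflexivity|apply Nat.div2_double]. Qed.

Lemma even_div2_succ_double (n : nat) :
  Nat.even (2 * n + 1) = false /\ Nat.div2 (2 * n + 1) = n.
Proof.
  rewrite Nat.add_1_r, Nat.even_succ, Nat.odd_mul.
  split; [reflexivity|apply Nat.div2_succ_double].
Qed.

Lemma is_pseries_PS_even (b : nat -> R) (x l : R) :
  is_pseries b (x ^ 2) l -> is_pseries (PS_even b) x l.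
Proof.
  intros Hb. replace l with (l + x * 0) by ring.
  apply is_pseries_odd_even.
  - eapply is_pseries_ext; [|exact Hb]. intros n. unfold PS_even.
    destruct (even_div2_double n) as [-> ->]. reflexivity.
  - eapply is_pseries_ext; [|apply is_pseries_const_0]. intros n. unfold PS_even.
    destruct (even_div2_succ_double n) as [-> _]. reflexivity.
Qed.

Lemma is_pseries_PS_odd (b : nat -> R) (x l : R) :
  is_pseries b (x ^ 2) l -> is_pseries (PS_odd b) x (x * l).
Proof.
  intros Hb. replace (x * l) with (0 + x * l) by ring.
  apply is_pseries_odd_even.
  - eapply is_pseries_ext; [|apply is_pseries_const_0]. intros n. unfold PS_odd.
    destruct (even_div2_double n) as [-> _]. reflexivity.
  - eapply is_pseries_ext; [|exact Hb]. intros n. unfold PS_odd.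
    destruct (even_div2_succ_double n) as [-> ->]. reflexivity.
Qed.

Lemma entire_comp_sqr (f : R -> R) : entire f -> entire (fun x => f (x ^ 2)).
Proof.
  intros Hf. destruct (entire_is_pseries f Hf) as [a Ha].
  apply (entire_of_is_pseries _ (PS_even a)). intros x.
  apply is_pseries_PS_even, Ha.
Qed.

Lemma entire_cos : entire cos.
Proof.
  apply (entire_of_is_pseries _ (PS_even cos_n)). intros x.
  apply is_pseries_PS_even, is_pseries_Reals. unfold cos.
  destruct (exist_cos (Rsqr x)) as [l Hl].
  replace (x ^ 2) with (Rsqr x) by (unfold Rsqr; ring). exact Hl.
Qed.

Lemma entire_sin : entire sin.
Proof.
  apply (entire_of_is_pseries _ (PS_odd sin_n)). intros x. unfold sin.
  destruct (exist_sin (Rsqr x)) as [l Hl].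
  apply is_pseries_PS_odd, is_pseries_Reals.
  replace (x ^ 2) with (Rsqr x) by (unfold Rsqr; ring). exact Hl.
Qed.

Lemma entire_quadratic (c0 c1 c2 : R) : entire (fun h => c0 + c1 * h + c2 * h ^ 2).
Proof.
  assert (Hsqr : entire (fun h => h ^ 2)).
  { apply (entire_ext (fun h => h * h)); [apply entire_mult; apply entire_id|intros h; ring]. }
  apply entire_plus; [apply entire_plus|]; try apply entire_scal.
  - apply entire_const.
  - apply entire_id.
  - exact Hsqr.
Qed.

Lemma entire_cos_sin_quadratic (c0 c1 c2 : R) :
  entire (fun h => cos (c0 + c1 * h + c2 * h ^ 2)) /\
  entire (fun h => sin (c0 + c1 * h + c2 * h ^ 2)).
Proof.
  assert (Hc1 := entire_comp_scal c1 _ entire_cos).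
  assert (Hs1 := entire_comp_scal c1 _ entire_sin).
  assert (Hc2 := entire_comp_sqr _ (entire_comp_scal c2 _ entire_cos)).
  assert (Hs2 := entire_comp_sqr _ (entire_comp_scal c2 _ entire_sin)).
  cbv beta in Hc1, Hs1, Hc2, Hs2.
  assert (Hcos : entire (fun h => cos (c1 * h + c2 * h ^ 2))).
  { apply (entire_ext (fun h => cos (c1 * h) * cos (c2 * h ^ 2) - sin (c1 * h) * sin (c2 * h ^ 2))).
    - apply entire_minus; apply entire_mult; assumption.
    - intros h. rewrite cos_plus. reflexivity. }
  assert (Hsin : entire (fun h => sin (c1 * h + c2 * h ^ 2))).
  { apply (entire_ext (fun h => sin (c1 * h) * cos (c2 * h ^ 2) + cos (c1 * h) * sin (c2 * h ^ 2))).
    - apply entire_plus; apply entire_mult; assumption.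
    - intros h. rewrite sin_plus. reflexivity. }
  split.
  - apply (entire_ext (fun h => cos c0 * cos (c1 * h + c2 * h ^ 2) - sin c0 * sin (c1 * h + c2 * h ^ 2))).
    + apply entire_minus; apply entire_scal; assumption.
    + intros h. rewrite Rplus_assoc, (cos_plus c0). reflexivity.
  - apply (entire_ext (fun h => sin c0 * cos (c1 * h + c2 * h ^ 2) + cos c0 * sin (c1 * h + c2 * h ^ 2))).
    + apply entire_plus; apply entire_scal; assumption.
    + intros h. rewrite Rplus_assoc, (sin_plus c0). reflexivity.
Qed.

Lemma entire_continuous (f : R -> R) (x : R) : entire f ->
  forall e, 0 < e -> exists eta, 0 < eta /\ forall y, Rabs (y - x) < eta -> Rabs (f y - f x) < e.
Proof.
  intros [a [Ha Hf]] e He.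
  destruct (PSeries_continuity a x (CV_radius_infinite_inside a x Ha) e He) as [eta [Heta Hcont]].
  exists eta. split; [exact Heta|]. intros y Hy. rewrite !Hf.
  destruct (Req_dec x y) as [<-|Hxy].
  - rewrite Rminus_diag, Rabs_R0. exact He.
  - apply Hcont. split; [split; [exact I|exact Hxy]|exact Hy].
Qed.

Lemma Rmult_pos_of_close (u c : R) : Rabs (u - c) < Rabs c -> 0 < u * c.
Proof.
  intros H. destruct (Rcase_abs c) as [Hc|Hc].
  - rewrite (Rabs_left c Hc) in H. apply Rabs_def2 in H. nra.
  - rewrite (Rabs_pos_eq c) in H by lra. apply Rabs_def2 in H. nra.
Qed.

Lemma PSeries_const_of_coef_0 (a : nat -> R) (x : R) :
  CV_radius a = p_infty -> (forall n, (1 <= n)%nat -> a n = 0) -> PSeries a x = a O.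
Proof.
  intros Ha Hz.
  rewrite PSeries_decr_1 by apply CV_radius_inside, CV_radius_infinite_inside, Ha.
  rewrite (PSeries_ext _ (fun _ => 0)), PSeries_const_0; [ring|].
  intros n. apply Hz. lia.
Qed.

Lemma PSeries_derive_same_sign (a : nat -> R) :
  CV_radius a = p_infty -> (exists n, (1 <= n)%nat /\ a n <> 0) ->
  exists e, 0 < e /\ forall x y, Rabs x < e -> Rabs y < e -> 0 < x * y ->
    0 < PSeries (PS_derive a) x * PSeries (PS_derive a) y.
Proof.
  intros Ha Hnz.
  destruct (Wf_nat.dec_inh_nat_subset_has_unique_least_element _
              (fun n => classic _) Hnz) as [m [[[Hm1 Ham] Hleast] _]].
  (* [m] is the least positive index with [a m <> 0], so the derivative series is
     [x^(m-1) * PSeries c x] with [c 0 = m a_m <> 0]. *)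
  set (b := PS_derive a). set (c := PS_decr_n b (m - 1)).
  assert (Hb : forall k, (k < m - 1)%nat -> b k = 0).
  { intros k Hk. unfold b, PS_derive.
    destruct (Req_dec (a (S k)) 0) as [-> | Hne]; [ring|].
    specialize (Hleast (S k) (conj (le_n_S _ _ (Nat.le_0_l k)) Hne)). lia. }
  assert (Hc0 : c O <> 0).
  { unfold c, PS_decr_n, b, PS_derive.
    replace (S (m - 1 + 0)) with m by lia.
    apply Rmult_integral_contrapositive. split; [apply not_0_INR; lia|exact Ham]. }
  assert (Hc : entire (PSeries c)).
  { exists c. split; [|reflexivity].
    unfold c, b. rewrite CV_radius_decr_n, CV_radius_derive. exact Ha. }
  destruct (entire_continuous _ 0 Hc (Rabs (c O))) as [e [He Hcont]].
  { apply Rabs_pos_lt, Hc0. }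
  rewrite PSeries_0 in Hcont.
  exists e. split; [exact He|]. intros x y Hx Hy Hxy.
  assert (Hcx : 0 < PSeries c x * c O).
  { apply Rmult_pos_of_close, Hcont. rewrite Rminus_0_r. exact Hx. }
  assert (Hcy : 0 < PSeries c y * c O).
  { apply Rmult_pos_of_close, Hcont. rewrite Rminus_0_r. exact Hy. }
  assert (Hpow : 0 < x ^ (m - 1) * y ^ (m - 1)).
  { rewrite <- Rpow_mult_distr. apply pow_lt, Hxy. }
  assert (Hcc : 0 < PSeries c x * PSeries c y).
  { assert (0 < c O * c O) by (apply Rsqr_pos_lt, Hc0). nra. }
  rewrite !(PSeries_decr_n_aux b (m - 1)) by exact Hb. fold c. nra.
Qed.

Lemma entire_strict_decr_left (g : R -> R) (d : R) : entire g -> 0 < d ->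
  (forall h, -d < h < 0 -> g 0 < g h) ->
  exists e, 0 < e /\ forall s t, -e < s -> s < t -> t < 0 -> g t < g s.
Proof.
  intros [a [Ha Hg]] Hd Hmin.
  assert (Hnz : exists n, (1 <= n)%nat /\ a n <> 0).
  { apply NNPP. intros Hno.
    assert (Hconst : forall x, g x = a O).
    { intros x. rewrite Hg. apply PSeries_const_of_coef_0; [exact Ha|].
      intros n Hn. apply NNPP. intros Hne. apply Hno. exists n. split; assumption. }
    specialize (Hmin (- d / 2)). rewrite !Hconst in Hmin. lra. }
  destruct (PSeries_derive_same_sign a Ha Hnz) as [e1 [He1 Hsign]].
  set (g' := PSeries (PS_derive a)).
  assert (Hder : forall x, derivable_pt_lim g x (g' x)).
  { intros x. apply (derivable_pt_lim_ext (PSeries a)); [intros y; symmetry; apply Hg|].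
    apply is_derive_Reals, is_derive_PSeries, CV_radius_infinite_inside, Ha. }
  set (e := Rmin e1 d).
  assert (He : 0 < e) by (apply Rmin_glb_lt; assumption).
  assert (He1e := Rmin_l e1 d). assert (Hde := Rmin_r e1 d). fold e in He1e, Hde.
  (* Since g(-e/2) > g(0), the mean value theorem gives a point where g' < 0. *)
  destruct (MVT_cor2 g g' (- e / 2) 0) as [z [Hz Hzint]]; [lra|intros; apply Hder|].
  assert (Hgz : g' z < 0).
  { assert (g 0 < g (- e / 2)) by (apply Hmin; lra). nra. }
  exists e. split; [exact He|]. intros s t Hs Hst Ht.
  destruct (MVT_cor2 g g' s t) as [w [Hw Hwint]]; [exact Hst|intros; apply Hder|].
  assert (Hgw : 0 < g' w * g' z).
  { apply Hsign; [rewrite Rabs_left; lra|rewrite Rabs_left; lra|nra]. }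
  nra.
Qed.

Definition half_nbhd (left : bool) (T dl t : R) : Prop :=
  if left then T - dl < t <= T else T <= t < T + dl.

Lemma half_nbhd_mono (left : bool) (T dl dl' t : R) :
  dl <= dl' -> half_nbhd left T dl t -> half_nbhd left T dl' t.
Proof. destruct left; simpl; lra. Qed.

Definition sign_constant_on (I : R -> Prop) (f : R -> R) : Prop :=
  (forall t, I t -> f t <= 0) \/ (forall t, I t -> 0 <= f t).

Lemma affine_sign_constant_half_nbhd (left : bool) (u k t0 T : R) :
  exists dl, 0 < dl /\ sign_constant_on (half_nbhd left T dl) (fun t => u + k * (t - t0)).
Proof.
  set (c := u + k * (T - t0)).
  assert (Hc : forall t, u + k * (t - t0) = c + k * (t - T)) by (intros t; unfold c; ring).
  unfold sign_constant_on. setoid_rewrite Hc.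
  destruct (Req_dec c 0) as [Hc0|Hc0].
  - exists 1. split; [lra|]. rewrite Hc0.
    destruct left, (Rle_or_lt 0 k); simpl; [left|right|right|left]; intros t Ht; nra.
  - assert (Hk : 0 < Rabs k + 1) by (generalize (Rabs_pos k); lra).
    assert (Hcpos : 0 < Rabs c) by (apply Rabs_pos_lt, Hc0).
    exists (Rabs c / (Rabs k + 1)). split; [apply Rdiv_lt_0_compat; assumption|].
    (* On this neighbourhood [|k (t - T)| < |c|], so [c + k (t - T)] has the sign of [c]. *)
    assert (Hsmall : forall t, half_nbhd left T (Rabs c / (Rabs k + 1)) t -> Rabs (k * (t - T)) < Rabs c).
    { intros t Ht.
      assert (Hd : Rabs (t - T) < Rabs c / (Rabs k + 1)).
      { destruct left; simpl in Ht; apply Rabs_def1; lra. }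
      apply (Rmult_lt_compat_l (Rabs k + 1)) in Hd; [|exact Hk].
      replace ((Rabs k + 1) * (Rabs c / (Rabs k + 1))) with (Rabs c) in Hd by (field; lra).
      rewrite Rabs_mult. generalize (Rabs_pos k) (Rabs_pos (t - T)). nra. }
    destruct (Rcase_abs c) as [Hneg|Hpos]; [left|right]; intros t Ht;
      specialize (Hsmall t Ht); apply Rabs_def2 in Hsmall.
    + rewrite Rabs_left in Hsmall by exact Hneg. lra.
    + rewrite Rabs_pos_eq in Hsmall by lra. lra.
Qed.

Lemma circ_omega_affine_on (I : R -> Prop) (t0 : R) (v a : vec) :
  sign_constant_on I (fun t => circ_omega0 v a + a_f v a / (2 * circ_r v a) * (t - t0)) ->
  exists W K, forall t, I t -> circ_omega t0 v a t = W + K * (t - t0).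
Proof.
  unfold circ_omega. cbv zeta.
  set (w := fun t => circ_omega0 v a + a_f v a / (2 * circ_r v a) * (t - t0)).
  intros [Hw|Hw]; destruct (Rlt_dec (circ_omega0 v a) 0).
  - exists (circ_omega0 v a), (a_f v a / (2 * circ_r v a)). intros t It.
    apply Rmin_right, (Hw t It).
  - exists 0, 0. intros t It. rewrite Rmax_left by apply (Hw t It). ring.
  - exists 0, 0. intros t It. rewrite Rmin_left by apply (Hw t It). ring.
  - exists (circ_omega0 v a), (a_f v a / (2 * circ_r v a)). intros t It.
    apply Rmax_right, (Hw t It).
Qed.

Definition planar_entire_on (I : R -> Prop) (T : R) (p : R -> vec) : Prop :=
  exists fx fy, entire fx /\ entire fy /\ forall t, I t -> p t = (fx (t - T), fy (t - T)).

Lemma planar_entire_on_mono (I J : R -> Prop) (T : R) (p : R -> vec) :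
  (forall t, J t -> I t) -> planar_entire_on I T p -> planar_entire_on J T p.
Proof.
  intros HJI [fx [fy [Hx [Hy Hp]]]]. exists fx, fy. split; [exact Hx|split; [exact Hy|]].
  intros t Jt. apply Hp, HJI, Jt.
Qed.

Lemma straight_pos_entire_on (I : R -> Prop) (t0 T : R) (p v a : vec) :
  planar_entire_on I T (straight_pos t0 p v a).
Proof.
  set (s := T - t0).
  exists (fun h => (fst p + s * fst v + / 2 * s ^ 2 * fst a) + (fst v + s * fst a) * h
                   + (/ 2 * fst a) * h ^ 2),
         (fun h => (snd p + s * snd v + / 2 * s ^ 2 * snd a) + (snd v + s * snd a) * h
                   + (/ 2 * snd a) * h ^ 2).
  split; [apply entire_quadratic|split; [apply entire_quadratic|]].
  intros t _. unfold straight_pos, vadd, vscale, s. cbn [fst snd]. f_equal; field.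
Qed.

Lemma circ_pos_entire_on (I : R -> Prop) (t0 T W K : R) (p v a : vec) :
  (forall t, I t -> circ_omega t0 v a t = W + K * (t - t0)) ->
  planar_entire_on I T (circ_pos t0 p v a).
Proof.
  intros Hom.
  set (s := T - t0).
  set (c0 := circ_alpha0 p v a + (W + K * s) * s).
  set (c1 := W + 2 * K * s).
  destruct (entire_cos_sin_quadratic c0 c1 K) as [Hcos Hsin].
  set (c := circ_center p v a). set (r := circ_r v a).
  exists (fun h => fst c + r * cos (c0 + c1 * h + K * h ^ 2)),
         (fun h => snd c + r * sin (c0 + c1 * h + K * h ^ 2)).
  split; [apply entire_plus; [apply entire_const|apply entire_scal, Hcos]|].
  split; [apply entire_plus; [apply entire_const|apply entire_scal, Hsin]|].
  intros t It.
  assert (Hth : circ_alpha0 p v a + circ_omega t0 v a t * (t - t0)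
                = c0 + c1 * (t - T) + K * (t - T) ^ 2).
  { rewrite (Hom t It). unfold c0, c1, s. ring. }
  unfold circ_pos. cbv zeta. rewrite Hth. reflexivity.
Qed.

Lemma model_pos_entire_half_nbhd (left : bool) (m : model) (t0 T : R) (p v a : vec) :
  exists dl, 0 < dl /\ planar_entire_on (half_nbhd left T dl) T (model_pos m t0 p v a).
Proof.
  destruct m; simpl.
  - exists 1. split; [lra|apply straight_pos_entire_on].
  - destruct (affine_sign_constant_half_nbhd left (circ_omega0 v a)
                (a_f v a / (2 * circ_r v a)) t0 T) as [dl [Hdl Hsign]].
    destruct (circ_omega_affine_on _ t0 v a Hsign) as [W [K HWK]].
    exists dl. split; [exact Hdl|]. apply (circ_pos_entire_on _ t0 T W K), HWK.
Qed.

Definition vnorm2 (u : vec) : R := fst u ^ 2 + snd u ^ 2.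

Lemma vnorm2_vsub_entire_on (I : R -> Prop) (T : R) (p q : R -> vec) :
  planar_entire_on I T p -> planar_entire_on I T q ->
  exists g, entire g /\ forall t, I t -> vnorm2 (vsub (p t) (q t)) = g (t - T).
Proof.
  intros [px [py [Hpx [Hpy Hp]]]] [qx [qy [Hqx [Hqy Hq]]]].
  assert (Hsq : forall f, entire f -> entire (fun h => f h ^ 2)).
  { intros f Hf. apply (entire_ext (fun h => f h * f h)); [apply entire_mult; exact Hf|].
    intros h. ring. }
  exists (fun h => (px h - qx h) ^ 2 + (py h - qy h) ^ 2). split.
  - apply entire_plus; apply Hsq, entire_minus; assumption.
  - intros t It. rewrite (Hp t It), (Hq t It). reflexivity.
Qed.

Definition entire_germ_at (left : bool) (f : R -> R) (T : R) : Prop :=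
  exists dl g, 0 < dl /\ entire g /\ forall t, half_nbhd left T dl t -> f t = g (t - T).

Lemma dist2_entire_germ_at (left : bool) (mi mj : model) (t0 T : R) (pi vi ai pj vj aj : vec) :
  entire_germ_at left
    (fun t => vnorm2 (vsub (model_pos mi t0 pi vi ai t) (model_pos mj t0 pj vj aj t))) T.
Proof.
  destruct (model_pos_entire_half_nbhd left mi t0 T pi vi ai) as [di [Hdi Hi]].
  destruct (model_pos_entire_half_nbhd left mj t0 T pj vj aj) as [dj [Hdj Hj]].
  destruct (vnorm2_vsub_entire_on (half_nbhd left T (Rmin di dj)) T
              (model_pos mi t0 pi vi ai) (model_pos mj t0 pj vj aj)) as [g [Hg Hdist]].
  - apply (planar_entire_on_mono _ _ _ _ (fun t => half_nbhd_mono left T _ _ t (Rmin_l di dj)) Hi).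
  - apply (planar_entire_on_mono _ _ _ _ (fun t => half_nbhd_mono left T _ _ t (Rmin_r di dj)) Hj).
  - exists (Rmin di dj), g. split; [apply Rmin_glb_lt; assumption|split; assumption].
Qed.

Lemma entire_germ_continuous (left : bool) (f : R -> R) (T : R) :
  entire_germ_at left f T -> forall e, 0 < e -> exists eta, 0 < eta /\
    forall t, half_nbhd left T eta t -> Rabs (f t - f T) < e.
Proof.
  intros [dl [g [Hdl [Hg Hfg]]]] e He.
  destruct (entire_continuous g 0 Hg e He) as [eta [Heta Hcont]].
  assert (Hpos : 0 < Rmin eta dl) by (apply Rmin_glb_lt; assumption).
  exists (Rmin eta dl). split; [exact Hpos|]. intros t Ht.
  assert (HT : half_nbhd left T (Rmin eta dl) T) by (destruct left; simpl; lra).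
  assert (Hle := Rmin_l eta dl).
  rewrite !Hfg by (apply (half_nbhd_mono _ _ _ _ _ (Rmin_r eta dl)); assumption).
  rewrite Rminus_diag. apply Hcont. rewrite Rminus_0_r.
  destruct left; simpl in Ht; apply Rabs_def1; lra.
Qed.

Lemma is_glb_ext (S S' : R -> Prop) (m : R) :
  (forall t, S t <-> S' t) -> is_glb S m -> is_glb S' m.
Proof.
  intros HS [Hlow Hgreat]. split.
  - intros t St. apply Hlow, HS, St.
  - intros b Hb. apply Hgreat. intros t St. apply Hb, HS, St.
Qed.

Lemma is_glb_approx (S : R -> Prop) (m eta : R) :
  is_glb S m -> 0 < eta -> exists t, S t /\ m <= t < m + eta.
Proof.
  intros [Hlow Hgreat] Heta. apply NNPP. intros Hno.
  assert (m + eta <= m); [|lra].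
  apply Hgreat. intros t St. apply Rnot_lt_le. intros Ht.
  apply Hno. exists t. split; [exact St|split; [apply Hlow, St|exact Ht]].
Qed.

Lemma is_glb_sublevel_le (P : R -> Prop) (f : R -> R) (c m : R) :
  is_glb (fun t => P t /\ f t <= c) m ->
  (forall e, 0 < e -> exists eta, 0 < eta /\ forall t, m <= t < m + eta -> f m - e < f t) ->
  f m <= c.
Proof.
  intros Hglb Hcont. apply Rnot_lt_le. intros Hlt.
  destruct (Hcont (f m - c)) as [eta [Heta Hnear]]; [lra|].
  destruct (is_glb_approx _ _ _ Hglb Heta) as [t [[_ Hft] Ht]].
  specialize (Hnear t Ht). lra.
Qed.

Lemma first_crossing_strict_decr (D : R -> R) (c t0 TS : R) :
  is_glb (fun t => t0 <= t /\ D t <= c) TS -> c < D t0 ->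
  entire_germ_at true D TS -> entire_germ_at false D TS ->
  exists tc, t0 <= tc < TS /\ forall s t, tc <= s -> s < t -> t < TS -> D t < D s.
Proof.
  intros Hglb Hsep HgermL HgermR.
  assert (HDTS : D TS <= c).
  { apply (is_glb_sublevel_le _ D _ _ Hglb). intros e He.
    destruct (entire_germ_continuous false D TS HgermR e He) as [eta [Heta Hnear]].
    exists eta. split; [exact Heta|]. intros t Ht.
    specialize (Hnear t Ht). apply Rabs_def2 in Hnear. lra. }
  assert (Hbefore : forall t, t0 <= t < TS -> c < D t).
  { intros t [Ht0 HtTS]. apply Rnot_le_lt. intros Hle.
    assert (TS <= t) by (apply (proj1 Hglb); split; assumption). lra. }
  assert (HT0 : t0 < TS).
  { assert (Ht0 : t0 <= TS) by (apply (proj2 Hglb); intros t [Ht _]; exact Ht).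
    destruct (Rle_lt_or_eq_dec _ _ Ht0) as [Hlt|<-]; [exact Hlt|lra]. }
  destruct HgermL as [dL [g [HdL [Hg HDg]]]].
  set (dd := Rmin dL (TS - t0)).
  assert (Hdd : 0 < dd) by (apply Rmin_glb_lt; lra).
  assert (HddL := Rmin_l dL (TS - t0)). assert (Hdd0 := Rmin_r dL (TS - t0)).
  fold dd in HddL, Hdd0.
  assert (HDh : forall h, - dd < h <= 0 -> D (TS + h) = g h).
  { intros h Hh. replace h with (TS + h - TS) at 2 by ring. apply HDg. simpl. lra. }
  destruct (entire_strict_decr_left g dd Hg Hdd) as [e [He Hdecr]].
  { intros h Hh. rewrite <- (HDh 0), <- (HDh h), Rplus_0_r by lra.
    apply (Rle_lt_trans _ c); [exact HDTS|apply Hbefore; lra]. }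
  set (e' := Rmin e dd).
  assert (He' : 0 < e') by (apply Rmin_glb_lt; assumption).
  assert (Hee := Rmin_l e dd). assert (Hedd := Rmin_r e dd). fold e' in Hee, Hedd.
  exists (TS - e' / 2). split; [lra|]. intros s t Hs Hst Ht.
  replace t with (TS + (t - TS)) by ring. replace s with (TS + (s - TS)) by ring.
  rewrite !HDh by lra. apply Hdecr; lra.
Qed.

Lemma sqrt_le_iff (x y : R) : 0 <= x -> 0 <= y -> (sqrt x <= y <-> x <= y ^ 2).
Proof.
  intros Hx Hy. rewrite <- (sqrt_pow2 y Hy) at 1. split.
  - apply sqrt_le_0; [exact Hx|apply pow2_ge_0].
  - apply sqrt_le_1_alt.
Qed.

Theorem theorem1
  (vmax amax phi t0 : R) (hphi : 0 < phi)
  (pi vi ai pj vj aj : vec) (mi mj : model)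
  (hvi : vnorm vi < vmax) (hai : vnorm ai < amax)
  (hvj : vnorm vj < vmax) (haj : vnorm aj < amax)
  (hmi : model_ok mi vi ai) (hmj : model_ok mj vj aj)
  (hsep : phi < vnorm (vsub (model_pos mi t0 pi vi ai t0) (model_pos mj t0 pj vj aj t0)))
  (TS : R)
  (hTS : is_glb (fun t => t0 <= t /\
           vnorm (vsub (model_pos mi t0 pi vi ai t) (model_pos mj t0 pj vj aj t)) - phi <= 0) TS)
  (hne : exists t, t0 <= t /\
           vnorm (vsub (model_pos mi t0 pi vi ai t) (model_pos mj t0 pj vj aj t)) - phi <= 0) :
  let d := fun t => vnorm (vsub (model_pos mi t0 pi vi ai t) (model_pos mj t0 pj vj aj t)) in
  exists tc, t0 <= tc < TS /\
    forall s t, tc <= s -> s < t -> t < TS -> d t - phi < d s - phi.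
Proof.
  intros d.
  set (D := fun t => vnorm2 (vsub (model_pos mi t0 pi vi ai t) (model_pos mj t0 pj vj aj t))).
  assert (HD0 : forall t, 0 <= D t).
  { intros t. apply Rplus_le_le_0_compat; apply pow2_ge_0. }
  assert (Hd : forall t, d t - phi <= 0 <-> D t <= phi ^ 2).
  { intros t. rewrite <- (sqrt_le_iff _ _ (HD0 t)) by lra. change (d t - phi <= 0 <-> d t <= phi). lra. }
  destruct (first_crossing_strict_decr D (phi ^ 2) t0 TS) as [tc [Htc Hdecr]].
  - refine (is_glb_ext _ _ _ _ hTS). intros t.
    change (t0 <= t /\ d t - phi <= 0 <-> t0 <= t /\ D t <= phi ^ 2). rewrite Hd. reflexivity.
  - apply Rnot_le_lt. rewrite <- Hd. change (phi < d t0) in hsep. lra.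
  - apply dist2_entire_germ_at.
  - apply dist2_entire_germ_at.
  - exists tc. split; [exact Htc|]. intros s t Hs Hst Ht.
    apply Rplus_lt_compat_r, sqrt_lt_1_alt. split; [apply HD0|apply Hdecr; assumption].
Qed.
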